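(* (Height-preserving weakening.) For all finite multisets of formulas $\Gamma,\Delta$, every formula $\nu$ and every $n\geq 1$: if $\vdash^n\Gamma\Rightarrow\Delta$ then $\vdash^n\Gamma,\nu\Rightarrow\Delta$ (left weakening), and if $\vdash^n\Gamma\Rightarrow\Delta$ then $\vdash^n\Gamma\Rightarrow\nu,\Delta$ (right weakening).
   Context: Fix a countably infinite set $\mathsf{Prop}$ of propositional variables. Classical formulas are generated by $\alpha ::= p \mid \bot \mid \neg\alpha \mid \alpha\wedge\alpha \mid \alpha\vee\alpha$ with $p\in\mathsf{Prop}$. Formulas are generated by $\phi ::= \alpha \mid \phi\wedge\phi \mid \phi\vee\phi \mid \phi\mathbin{\backslash\!\!/}\phi$ where $\alpha$ is classical ($\vee$: split disjunction, $\mathbin{\backslash\!\!/}$: inquisitive disjunction). A sequent is $\Gamma\Rightarrow\Delta$ with $\Gamma,\Delta$ finite multisets of formulas; ''$\Gamma,\Delta$'' denotes multiset union. Deep-inference notation: for a formula $\chi$ with a designated occurrence of a subformula not in the scope of any negation, $\chi\{\eta\}$ denotes the result of replacing that occurrence by $\eta$. The cut-free calculus $\mathsf{GT}^-$ ($\alpha$ ranges over classical formulas, $\Lambda$ over multisets of classical formulas): axioms $\Gamma,p\Rightarrow p,\Delta$ and $\Gamma,\bot\Rightarrow\Delta$; (L$\neg$) from $\Gamma\Rightarrow\alpha,\Delta$ infer $\Gamma,\neg\alpha\Rightarrow\Delta$; (R$\neg$) from $\Gamma,\alpha\Rightarrow\Delta$ infer $\Gamma\Rightarrow\neg\alpha,\Delta$;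 (L$\wedge$) from $\Gamma,\phi,\psi\Rightarrow\Delta$ infer $\Gamma,\phi\wedge\psi\Rightarrow\Delta$; (R$\wedge$) from $\Gamma\Rightarrow\phi,\Lambda$ and $\Gamma\Rightarrow\psi,\Lambda$ infer $\Gamma\Rightarrow\phi\wedge\psi,\Lambda,\Delta$; (L$\vee$) from $\Gamma,\phi\Rightarrow\Lambda$ and $\Gamma,\psi\Rightarrow\Lambda$ infer $\Gamma,\phi\vee\psi\Rightarrow\Lambda,\Delta$; (R$\vee$) from $\Gamma\Rightarrow\phi,\psi,\Delta$ infer $\Gamma\Rightarrow\phi\vee\psi,\Delta$; (L$\mathbin{\backslash\!\!/}$) from $\Gamma,\chi\{\phi_L\}\Rightarrow\Delta$ and $\Gamma,\chi\{\phi_R\}\Rightarrow\Delta$ infer $\Gamma,\chi\{\phi_L\mathbin{\backslash\!\!/}\phi_R\}\Rightarrow\Delta$; (R$\mathbin{\backslash\!\!/}$) from $\Gamma\Rightarrow\chi\{\phi_i\},\Delta$ ($i\in\{L,R\}$) infer $\Gamma\Rightarrow\chi\{\phi_L\mathbin{\backslash\!\!/}\phi_R\},\Delta$. The height of a derivation consisting of a single axiom is $1$; otherwise it is $1$ plus the maximum height of the subderivations of the premises of its last rule. $\vdash^n\Gamma\Rightarrow\Delta$ means there is a $\mathsf{GT}^-$-derivation of $\Gamma\Rightarrow\Delta$ of height at most $n$. *)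

From Stdlib Require Import List Permutation Arith.
Import ListNotations.

Inductive form : Type :=
| Var  : nat -> form
| Bot  : form
| Neg  : form -> form
| And  : form -> form -> form
| Or   : form -> form -> form     (* split disjunction *)
| Ivee : form -> form -> form.    (* inquisitive disjunction *)

Fixpoint classical (f : form) : Prop :=
  match f with
  | Var _ | Bot => True
  | Neg a => classical a
  | And a b | Or a b => classical a /\ classical b
  | Ivee _ _ => False
  end.

Fixpoint wf (f : form) : Prop :=
  match f with
  | Var _ | Bot => True
  | Neg a => classical a
  | And a b | Or a b | Ivee a b => wf a /\ wf b
  end.

(* Deep-inference contexts chi{ } : the hole is never under a negation. *)
Inductive ctx : Type :=
| Hole  : ctx
| CAndL : ctx -> form -> ctx
| CAndR : form -> ctx -> ctx
| COrL  : ctx -> form -> ctx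
| COrR  : form -> ctx -> ctx
| CIvL  : ctx -> form -> ctx
| CIvR  : form -> ctx -> ctx.

Fixpoint plug (c : ctx) (e : form) : form :=
  match c with
  | Hole => e
  | CAndL c f => And (plug c e) f
  | CAndR f c => And f (plug c e)
  | COrL c f => Or (plug c e) f
  | COrR f c => Or f (plug c e)
  | CIvL c f => Ivee (plug c e) f
  | CIvR f c => Ivee f (plug c e)
  end.

(* Sequents Gamma => Delta: multisets represented by lists up to Permutation.
   Every rule's conclusion is stated up to permutation of its antecedent and
   succedent. *)
Inductive deriv : list form -> list form -> Type :=
| dAx G D G0 D0 p :
    Permutation G (Var p :: G0) -> Permutation D (Var p :: D0) -> deriv G D
| dBot G D G0 :
    Permutation G (Bot :: G0) -> deriv G D
| dLNeg G D G0 a :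
    classical a -> Permutation G (Neg a :: G0) ->
    deriv G0 (a :: D) -> deriv G D
| dRNeg G D D0 a :
    classical a -> Permutation D (Neg a :: D0) ->
    deriv (a :: G) D0 -> deriv G D
| dLAnd G D G0 f g :
    Permutation G (And f g :: G0) ->
    deriv (f :: g :: G0) D -> deriv G D
| dRAnd G D L D0 f g :
    Forall classical L ->
    Permutation D (And f g :: L ++ D0) ->
    deriv G (f :: L) -> deriv G (g :: L) -> deriv G D
| dLOr G D G0 L D0 f g :
    Forall classical L ->
    Permutation G (Or f g :: G0) ->
    Permutation D (L ++ D0) ->
    deriv (f :: G0) L -> deriv (g :: G0) L -> deriv G D
| dROr G D D0 f g :
    Permutation D (Or f g :: D0) ->
    deriv G (f :: g :: D0) -> deriv G D
| dLIv G D G0 c fl fr :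
    Permutation G (plug c (Ivee fl fr) :: G0) ->
    deriv (plug c fl :: G0) D -> deriv (plug c fr :: G0) D -> deriv G D
| dRIvL G D D0 c fl fr :
    Permutation D (plug c (Ivee fl fr) :: D0) ->
    deriv G (plug c fl :: D0) -> deriv G D
| dRIvR G D D0 c fl fr :
    Permutation D (plug c (Ivee fl fr) :: D0) ->
    deriv G (plug c fr :: D0) -> deriv G D.

Fixpoint height {G D} (d : deriv G D) : nat :=
  match d with
  | dAx _ _ _ _ _ _ _ => 1
  | dBot _ _ _ _ => 1
  | dLNeg _ _ _ _ _ _ d1 => S (height d1)
  | dRNeg _ _ _ _ _ _ d1 => S (height d1)
  | dLAnd _ _ _ _ _ _ d1 => S (height d1)
  | dRAnd _ _ _ _ _ _ _ _ d1 d2 => S (Nat.max (height d1) (height d2))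
  | dLOr _ _ _ _ _ _ _ _ _ _ d1 d2 => S (Nat.max (height d1) (height d2))
  | dROr _ _ _ _ _ _ d1 => S (height d1)
  | dLIv _ _ _ _ _ _ _ d1 d2 => S (Nat.max (height d1) (height d2))
  | dRIvL _ _ _ _ _ _ _ d1 => S (height d1)
  | dRIvR _ _ _ _ _ _ _ d1 => S (height d1)
  end.

Definition vdash (n : nat) (G D : list form) : Prop :=
  exists d : deriv G D, height d <= n.

From Stdlib Require Import List Permutation Lia.
Import ListNotations.

(* Induction on the derivation, weakening by a whole multiset [E] at once:
   axioms absorb [E] into their side context and every other rule passes it
   up to its premises.  The exceptions are (R/\) and (L\/) under right
   weakening: their premises may carry only the classical multiset [L] on the
   right, but the free context [D0] of their conclusion absorbs [E].  Heights
   never grow. *)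

Lemma Permutation_app_skip {A} (E l l' : list A) (a : A) :
  Permutation l' (E ++ l) -> Permutation (a :: l') (E ++ a :: l).
Proof.
  intros H. rewrite H. apply Permutation_middle.
Qed.

Lemma Permutation_app_focus {A} (E l l' l0 : list A) (a : A) :
  Permutation l' (E ++ l) -> Permutation l (a :: l0) ->
  Permutation l' (a :: E ++ l0).
Proof.
  intros H H0. rewrite H, H0. symmetry. apply Permutation_middle.
Qed.

Lemma deriv_weakenL G D (d : deriv G D) E G' :
  Permutation G' (E ++ G) -> exists d' : deriv G' D, height d' <= height d.
Proof.
  revert E G'; induction d; intros E G' HG'.
  - exists (dAx _ _ _ _ _ (Permutation_app_focus _ _ _ _ _ HG' p0) p1).
    simpl; lia.
  - exists (dBot _ D _ (Permutation_app_focus _ _ _ _ _ HG' p)). simpl; lia.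
  - destruct (IHd E (E ++ G0) (Permutation_refl _)) as [d1 H1].
    exists (dLNeg _ _ _ _ c (Permutation_app_focus _ _ _ _ _ HG' p) d1).
    simpl; lia.
  - destruct (IHd E (a :: G') (Permutation_app_skip _ _ _ _ HG')) as [d1 H1].
    exists (dRNeg _ _ _ _ c p d1). simpl; lia.
  - destruct (IHd E (f :: g :: E ++ G0) (Permutation_app_swap_app [f; g] E G0))
      as [d1 H1].
    exists (dLAnd _ _ _ _ _ (Permutation_app_focus _ _ _ _ _ HG' p) d1).
    simpl; lia.
  - destruct (IHd1 E G' HG') as [d1' H1].
    destruct (IHd2 E G' HG') as [d2' H2].
    exists (dRAnd _ _ _ _ _ _ f0 p d1' d2'). simpl; lia.
  - destruct (IHd1 E (f :: E ++ G0) (Permutation_app_swap_app [f] E G0))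
      as [d1' H1].
    destruct (IHd2 E (g :: E ++ G0) (Permutation_app_swap_app [g] E G0))
      as [d2' H2].
    exists (dLOr _ _ _ _ _ _ _ f0 (Permutation_app_focus _ _ _ _ _ HG' p) p0
              d1' d2').
    simpl; lia.
  - destruct (IHd E G' HG') as [d1 H1].
    exists (dROr _ _ _ _ _ p d1). simpl; lia.
  - destruct (IHd1 E (plug c fl :: E ++ G0)
                (Permutation_app_swap_app [plug c fl] E G0)) as [d1' H1].
    destruct (IHd2 E (plug c fr :: E ++ G0)
                (Permutation_app_swap_app [plug c fr] E G0)) as [d2' H2].
    exists (dLIv _ _ _ _ _ _ (Permutation_app_focus _ _ _ _ _ HG' p) d1' d2').
    simpl; lia.
  - destruct (IHd E G' HG') as [d1 H1].
    exists (dRIvL _ _ _ _ _ _ p d1). simpl; lia.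
  - destruct (IHd E G' HG') as [d1 H1].
    exists (dRIvR _ _ _ _ _ _ p d1). simpl; lia.
Qed.

Lemma deriv_weakenR G D (d : deriv G D) E D' :
  Permutation D' (E ++ D) -> exists d' : deriv G D', height d' <= height d.
Proof.
  revert E D'; induction d; intros E D' HD'.
  - exists (dAx _ _ _ _ _ p0 (Permutation_app_focus _ _ _ _ _ HD' p1)).
    simpl; lia.
  - exists (dBot _ D' _ p). simpl; lia.
  - destruct (IHd E (a :: D') (Permutation_app_skip _ _ _ _ HD')) as [d1 H1].
    exists (dLNeg _ _ _ _ c p d1). simpl; lia.
  - destruct (IHd E (E ++ D0) (Permutation_refl _)) as [d1 H1].
    exists (dRNeg _ _ _ _ c (Permutation_app_focus _ _ _ _ _ HD' p) d1).
    simpl; lia.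
  - destruct (IHd E D' HD') as [d1 H1].
    exists (dLAnd _ _ _ _ _ p d1). simpl; lia.
  - assert (P : Permutation D' (And f g :: L ++ E ++ D0)).
    { rewrite (Permutation_app_focus _ _ _ _ _ HD' p).
      apply perm_skip, Permutation_app_swap_app. }
    exists (dRAnd _ _ _ _ _ _ f0 P d1 d2). simpl; lia.
  - assert (P : Permutation D' (L ++ E ++ D0)).
    { rewrite HD', p0. apply Permutation_app_swap_app. }
    exists (dLOr _ _ _ _ _ _ _ f0 p P d1 d2). simpl; lia.
  - destruct (IHd E (f :: g :: E ++ D0) (Permutation_app_swap_app [f; g] E D0))
      as [d1 H1].
    exists (dROr _ _ _ _ _ (Permutation_app_focus _ _ _ _ _ HD' p) d1).
    simpl; lia.
  - destruct (IHd1 E D' HD') as [d1' H1].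
    destruct (IHd2 E D' HD') as [d2' H2].
    exists (dLIv _ _ _ _ _ _ p d1' d2'). simpl; lia.
  - destruct (IHd E (plug c fl :: E ++ D0)
                (Permutation_app_swap_app [plug c fl] E D0)) as [d1 H1].
    exists (dRIvL _ _ _ _ _ _ (Permutation_app_focus _ _ _ _ _ HD' p) d1).
    simpl; lia.
  - destruct (IHd E (plug c fr :: E ++ D0)
                (Permutation_app_swap_app [plug c fr] E D0)) as [d1 H1].
    exists (dRIvR _ _ _ _ _ _ (Permutation_app_focus _ _ _ _ _ HD' p) d1).
    simpl; lia.
Qed.

Lemma vdash_weakenL n G D E : vdash n G D -> vdash n (E ++ G) D.
Proof.
  intros [d Hd].
  destruct (deriv_weakenL G D d E (E ++ G) (Permutation_refl _)) as [d' H].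
  exists d'; lia.
Qed.

Lemma vdash_weakenR n G D E : vdash n G D -> vdash n G (E ++ D).
Proof.
  intros [d Hd].
  destruct (deriv_weakenR G D d E (E ++ D) (Permutation_refl _)) as [d' H].
  exists d'; lia.
Qed.

Theorem lemma4p1 :
  forall (G D : list form) (nu : form) (n : nat),
    1 <= n -> Forall wf G -> Forall wf D -> wf nu ->
    (vdash n G D -> vdash n (nu :: G) D) /\
    (vdash n G D -> vdash n G (nu :: D)).
Proof.
  intros G D nu n _ _ _ _. split.
  - exact (vdash_weakenL n G D [nu]).
  - exact (vdash_weakenR n G D [nu]).
Qed.
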